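(* Let $N\ge1$ be an integer and $a\neq0$, $b\neq 0$ complex constants. Let $\big(z_1(\ell),\dots,z_N(\ell)\big)$, $\ell=0,1,2,\dots$, be a sequence of $N$-tuples of complex numbers such that for every $\ell\ge0$, writing $z_k=z_k(\ell)$ and $\tilde z_k=z_k(\ell+1)$, the numbers $z_1(\ell+2),\dots,z_N(\ell+2)$ are (in some order, with multiplicity) the $N$ roots in $z$ of the equation (polynomial of degree $N$ after clearing denominators) $$\sum_{k=1}^{N}\left\{\left(\frac{\tilde z_k-a z_k}{z-a\tilde z_k}\right)\left(\frac{1+b\tilde z_k}{1+b z_k}\right)\prod_{j=1,\,j\neq k}^{N}\left[\left(\frac{\tilde z_k-a z_j}{\tilde z_k-\tilde z_j}\right)\left(\frac{1+b\tilde z_j/a}{1+b z_j}\right)\right]\right\}=1.$$ Let $$v_m(0)=\frac{\prod_{j=1}^{N}\big(z_j(1)-a\,z_m(0)\big)}{\prod_{j=1,\,j\neq m}^{N}\big[a\,\big(z_j(0)-z_m(0)\big)\big]},\qquad [V(0)]_{nm}=\frac{v_m(0)}{1+b\,z_m(0)},\qquad n,m=1,\dots,N,$$ $U(0)=\mathrm{diag}\big(z_1(0),\dots,z_N(0)\big)$, $I$ the $N\times N$ identity, and $$U(\ell)=U(0)\,[aI+bV(0)]^{\ell}+V(0)\,[(a-1)I+bV(0)]^{-1}\big\{[aI+bV(0)]^{\ell}-I\big\}.$$ Then for every $\ell\ge0$ the multiset $\{z_1(\ell),\dots,z_N(\ell)\}$ coincides with the multiset of eigenvalues of $U(\ell)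$.
   Context: Throughout, data are assumed generic: for every $\ell$ the $z_n(\ell)$ are pairwise distinct, all denominators appearing are nonzero, and the matrix $(a-1)I+bV(0)$ is invertible. *)

From HB Require Import structures.
From mathcomp Require Import all_boot all_order all_algebra.
From mathcomp Require Import complex.
From mathcomp Require Import reals.
Set Implicit Arguments. Unset Strict Implicit. Unset Printing Implicit Defensive.
Import Order.TTheory GRing.Theory Num.Theory.
Local Open Scope ring_scope.

Section Defs.
Variables (R : realType) (n : nat).
Local Notation C := (R[i]).
Local Notation N := n.+1.

(* z l k = z_{k+1}(l), k : 'I_N *)
Implicit Types (a b : C) (z : nat -> 'I_N -> C).

Definition step_coef a b z (l : nat) (k : 'I_N) : C :=
  (z l.+1 k - a * z l k) * ((1 + b * z l.+1 k) / (1 + b * z l k)) *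
  \prod_(j < N | j != k)
     (((z l.+1 k - a * z l j) / (z l.+1 k - z l.+1 j)) *
      ((1 + b * z l.+1 j / a) / (1 + b * z l j))).

(* The equation  sum_k step_coef_k / (z - a zt_k) = 1,  after multiplication
   by prod_k (z - a zt_k), is  step_poly = 0, where *)
Definition step_poly a b z (l : nat) : {poly C} :=
  \prod_(k < N) ('X - (a * z l.+1 k)%:P)
  - \sum_(k < N) (step_coef a b z l k)%:P *
       \prod_(j < N | j != k) ('X - (a * z l.+1 j)%:P).

Definition v0 a b z (m : 'I_N) : C :=
  (\prod_(j < N) (z 1%N j - a * z 0%N m)) /
  (\prod_(j < N | j != m) (a * (z 0%N j - z 0%N m))).

Definition V0 a b z : 'M[C]_N := \matrix_(i < N, m < N) (v0 a b z m / (1 + b * z 0%N m)).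

Definition U0 z : 'M[C]_N := diag_mx (\row_(m < N) z 0%N m).

Definition Umat a b z (l : nat) : 'M[C]_N :=
  U0 z *m (a%:M + b *: V0 a b z) ^+ l
  + V0 a b z *m invmx ((a - 1)%:M + b *: V0 a b z)
      *m ((a%:M + b *: V0 a b z) ^+ l - 1%:M).

End Defs.

From mathcomp Require Import all_boot all_order all_algebra.
From mathcomp Require Import complex reals ring.
Set Implicit Arguments. Unset Strict Implicit. Unset Printing Implicit Defensive.
Import Order.TTheory GRing.Theory Num.Theory.
Local Open Scope ring_scope.

(* Since V(0) = 1 w has rank one, U(l+1) = U(l) (aI + bV(0)) + V(0) = a U(l) + u w with
   u = 1 + b U(l) 1, and the matrix determinant lemma, applied twice, expresses the
   characteristic polynomial of U(l+2) at a s through those of a U(l) and of U(l+1) at s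
   and the scalar a + b w 1.  At the N distinct nodes s = z_k(l+1) the characteristic
   polynomial of U(l+1) vanishes, and the value obtained at a z_k(l+1) is exactly that of
   the cleared equation; two monic polynomials of degree N agreeing at N distinct points
   coincide.  The base case is the same computation for the diagonal U(0): the
   characteristic polynomial of U(1) is the numerator of 1 - sum_m v_m(0) / (z - a z_m(0)),
   and v_m(0) is defined so that it takes the value prod_j (a z_m(0) - z_j(1)) at
   a z_m(0). *)

Lemma eq_poly_off_root (F : numFieldType) (r p q : {poly F}) : r != 0 ->
  (forall x, ~~ root r x -> p.[x] = q.[x]) -> p = q.
Proof.
move=> r_neq0 pq; apply/eqP; rewrite -subr_eq0 -(mulIr_eq0 _ (mulIf r_neq0)).
apply/eqP/(@roots_geq_poly_eq0 _ _ [seq i%:R | i <- iota 0 (size ((p - q) * r))]).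
- apply/allP => _ /mapP[i _ ->]; rewrite /root !hornerE.
  by have [/eqP->|/pq->] := boolP (root r i%:R); rewrite ?mulr0 ?subrr ?mul0r.
- by rewrite map_inj_uniq ?iota_uniq // => i j /eqP; rewrite eqr_nat => /eqP.
- by rewrite size_map size_iota.
Qed.

Section Interpolation.
Variables (F : idomainType) (m : nat).

Lemma monic_interp (x : 'I_m -> F) (p q : {poly F}) : injective x ->
  p \is monic -> q \is monic -> size p = m.+1 -> size q = m.+1 ->
  (forall k, p.[x k] = q.[x k]) -> p = q.
Proof.
move=> x_inj /monicP p1 /monicP q1 sp sq pq; apply/eqP; rewrite -subr_eq0; apply/eqP.
apply: (@roots_geq_poly_eq0 _ _ [seq x k | k <- enum 'I_m]).
- by apply/allP => _ /mapP[k _ ->]; rewrite /root !hornerE pq subrr.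
- by rewrite map_inj_uniq ?enum_uniq.
rewrite size_map size_enum_ord; apply/leq_sizeP => j; rewrite leq_eqVlt coefB.
case/orP => [/eqP <- | mj].
  by move: p1 q1; rewrite !lead_coefE sp sq => -> ->; rewrite subrr.
by rewrite !nth_default ?subrr ?sp ?sq.
Qed.

Lemma char_poly_interp (M : 'M[F]_m) (x y : 'I_m -> F) : injective x ->
  (forall k, (char_poly M).[x k] = \prod_j (x k - y j)) ->
  char_poly M = \prod_j ('X - (y j)%:P).
Proof.
move=> x_inj Mxy; apply: (monic_interp x_inj).
- exact: char_poly_monic.
- exact: monic_prod_XsubC.
- exact: size_char_poly.
- by rewrite size_prod_XsubC -[index_enum _]enumT size_enum_ord.
by move=> k; rewrite Mxy horner_prod; under [RHS]eq_bigr do rewrite hornerXsubC.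
Qed.

End Interpolation.

Section SecularPoly.
Variables (R : comNzRingType) (m : nat).

Definition secular_poly (x c : 'I_m -> R) : {poly R} :=
  \prod_j ('X - (x j)%:P) - \sum_i (c i)%:P * \prod_(j | j != i) ('X - (x j)%:P).

Lemma secular_poly_node x c k :
  (secular_poly x c).[x k] = - (c k * \prod_(j | j != k) (x k - x j)).
Proof.
rewrite hornerD hornerN horner_prod (bigD1 k) //= hornerXsubC subrr mul0r add0r.
rewrite horner_sum (bigD1 k) //= [X in _ + X]big1 ?addr0 => [|i ik].
  by rewrite hornerM hornerC horner_prod; under eq_bigr do rewrite hornerXsubC.
by rewrite hornerM horner_prod (bigD1 k) 1?eq_sym //= hornerXsubC subrr mul0r mulr0.
Qed.

End SecularPoly.

Lemma horner_char_poly (R : comNzRingType) n (M : 'M[R]_n) x :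
  (char_poly M).[x] = \det (x%:M - M).
Proof.
rewrite /char_poly -horner_evalE -det_map_mx; congr (\det _).
by apply/matrixP => i j; rewrite !mxE /= horner_evalE hornerD hornerN hornerMn hornerX hornerC.
Qed.

Lemma det_id_sub_rank1 (R : comNzRingType) n (u : 'cV[R]_n) (w : 'rV[R]_n) :
  \det (1%:M - u *m w) = 1 - (w *m u) 0 0.
Proof.
have /(congr1 determinant) : block_mx 1%:M 0 u 1%:M *m block_mx 1%:M w 0 (1%:M - u *m w)
    = block_mx 1%:M w 0 1%:M *m block_mx (1%:M - w *m u) 0 u 1%:M.
  by rewrite !mulmx_block !mul1mx !mul0mx !mulmx1 !addr0 !add0r addrC subrK subrK.
rewrite !det_mulmx !det_lblock !det_ublock !det1 !mul1r mulr1 => ->.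
by rewrite det_mx11 !mxE.
Qed.

Lemma det_sub_rank1 (R : comUnitRingType) n (M : 'M[R]_n) (u : 'cV[R]_n) (w : 'rV[R]_n) :
  M \in unitmx ->
  \det (M - u *m w) = \det M * (1 - (w *m invmx M *m u) 0 0).
Proof.
move=> M_unit; have -> : M - u *m w = M *m (1%:M - (invmx M *m u) *m w).
  by rewrite mulmxBr mulmx1 !mulmxA mulmxV // mul1mx.
by rewrite det_mulmx det_id_sub_rank1 mulmxA.
Qed.

Lemma det_scalar_add_rank1 (F : fieldType) n (a : F) (u : 'cV[F]_n) w : a != 0 ->
  a * \det (a%:M + u *m w) = a ^+ n * (a + (w *m u) 0 0).
Proof.
move=> a_neq0; have a_unit : (a%:M : 'M[F]_n) \in unitmx.
  by rewrite unitmxE det_scalar unitrX ?unitfE.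
rewrite -[u]opprK mulNmx opprK det_sub_rank1 // invmx_scalar det_scalar.
by rewrite mul_mx_scalar -scalemxAl mxE mulmxN mxE; field.
Qed.

Lemma det_scalar_add_scale (F : fieldType) n (M : 'M[F]_n) (r : 'I_n -> F) c d :
  char_poly M = \prod_j ('X - (r j)%:P) -> d != 0 ->
  \det (c%:M + d *: M) = \prod_j (c + d * r j).
Proof.
move=> charM d_neq0.
have -> : c%:M + d *: M = - d *: ((- (c / d))%:M - M).
  by rewrite scalerBr scale_scalar_mx mulrN mulNr opprK mulrC divfK // scaleNr opprK.
rewrite detZ -horner_char_poly charM horner_prod -[X in _ ^+ X]card_ord -prodrMl.
by apply: eq_bigr => j _; rewrite hornerXsubC; field.
Qed.

Lemma char_poly_diag_add_rank1 (F : numFieldType) m (d : 'I_m -> F) (u : 'cV[F]_m) w :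
  char_poly (diag_mx (\row_j d j) + u *m w) =
  secular_poly d (fun i => w 0 i * u i 0).
Proof.
apply: (eq_poly_off_root (monic_neq0 (monic_prod_XsubC _ _ d))) => x.
rewrite /root horner_prod => /prodf_neq0 dx.
have {}dx j : x - d j != 0 by have := dx j isT; rewrite hornerXsubC.
pose D : 'M[F]_m := diag_mx (\row_j (x - d j)).
have D_unit : D \in unitmx.
  by rewrite unitmxE det_diag unitfE; apply/prodf_neq0 => j _; rewrite mxE.
have Dinv_u : invmx D *m u = \col_i (u i 0 / (x - d i)).
  apply: (canLR (mulKmx D_unit)); apply/matrixP => i j; rewrite mul_diag_mx !mxE ord1.
  by rewrite mulrC divfK.
have DE : x%:M - (diag_mx (\row_j d j) + u *m w) = D - u *m w.
  rewrite opprD addrA; congr (_ - _); apply/matrixP => i j; rewrite !mxE.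
  by case: eqVneq => [->|_]; rewrite ?mulr1n ?mulr0n ?subrr.
rewrite horner_char_poly DE det_sub_rank1 // -mulmxA Dinv_u det_diag /secular_poly.
rewrite hornerD hornerN horner_prod horner_sum [(w *m _) 0 0]mxE mulrBr mulr1 mulr_sumr.
have row_x j : (\row_j (x - d j)) 0 j = ('X - (d j)%:P).[x] by rewrite mxE hornerXsubC.
under eq_bigr do rewrite row_x.
congr (_ - _); apply: eq_bigr => i _.
rewrite mxE hornerM hornerC horner_prod (bigD1 i) //= hornerXsubC.
by move: (\prod_(j | j != i) _) => P; field; exact: dx.
Qed.

Section RankOneDynamics.
Variables (F : numFieldType) (n : nat) (a b : F) (w : 'rV[F]_n.+1).
Hypothesis a_neq0 : a != 0.
Local Notation N := n.+1.
Local Notation ones := (const_mx 1 : 'cV[F]_N).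
Let c : F := (w *m ones) 0 0.
Let gamma := a + b * c.

Definition Unext (Y : 'M[F]_N) : 'M[F]_N := Y *m (a%:M + b *: (ones *m w)) + ones *m w.

Lemma UnextE Y : Unext Y = a *: Y + (ones + b *: (Y *m ones)) *m w.
Proof.
rewrite /Unext mulmxDr mul_mx_scalar -scalemxAr mulmxA mulmxDl addrC.
by rewrite -scalemxAl addrCA.
Qed.

Section Resolvent.
Variables (Y : 'M[F]_N) (s : F).
Let M := s%:M - a *: Y.
Hypothesis M_unit : M \in unitmx.
Let resolvent (X : 'cV[F]_N) : F := (w *m invmx M *m X) 0 0.
Let u := ones + b *: (Y *m ones).
Let phi := resolvent u.
Let psi := resolvent ones.
Let chi := resolvent (Y *m ones).

Lemma det_sub_Unext : \det (s%:M - Unext Y) = \det M * (1 - phi).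
Proof. by rewrite -det_sub_rank1 // UnextE opprD addrA. Qed.

Lemma resolventD X X' : resolvent (X + X') = resolvent X + resolvent X'.
Proof. by rewrite /resolvent mulmxDr [LHS]mxE. Qed.

Lemma resolventZ k X : resolvent (k *: X) = k * resolvent X.
Proof. by rewrite /resolvent -scalemxAr [LHS]mxE. Qed.

Lemma resolvent_uE : phi = psi + b * chi.
Proof. by rewrite /phi /u resolventD resolventZ. Qed.

Lemma resolvent_aYE : a * chi = s * psi - c.
Proof.
have aY : a *: Y = s%:M - M by rewrite /M opprB addrC subrK.
have -> : a * chi = (w *m invmx M *m ((a *: Y) *m ones)) 0 0.
  by rewrite -scalemxAl -scalemxAr mxE.
rewrite aY mulmxBl mulmxBr mul_scalar_mx -scalemxAr -!mulmxA mulKmx //.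
by rewrite mulmxA [LHS]mxE [X in X + _]mxE [X in _ + X]mxE.
Qed.

Lemma det_sub_Unext2 : \det ((a * s)%:M - Unext (Unext Y)) =
  a ^+ N * \det M * (1 - phi - a^-1 * (psi + b * (a * chi + c * phi))).
Proof.
set u' := ones + b *: (Unext Y *m ones).
have -> : (a * s)%:M - Unext (Unext Y) = a *: M - (a *: u + u') *m w.
  rewrite [Unext (Unext Y)]UnextE -/u' UnextE -/u /M scalerBr scale_scalar_mx.
  by rewrite scalerDr scalemxAl [in RHS]mulmxDl !opprD !addrA.
have aM_unit : a *: M \in unitmx by rewrite unitmxZ ?unitfE.
have UnextY1 : Unext Y *m ones = a *: (Y *m ones) + c *: u.
  by rewrite UnextE mulmxDl -scalemxAl -mulmxA [w *m ones]mx11_scalar mul_mx_scalar.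
rewrite det_sub_rank1 // detZ invmxZ // -scalemxAr -scalemxAl mxE -/(resolvent _).
rewrite /u' UnextY1 !(resolventD, resolventZ).
by rewrite resolvent_uE -/psi -/chi; field.
Qed.

(* Eliminating [psi] and [chi] (a linear system of determinant [a + b s]) leaves [phi],
   that is, the two determinants at [s]. *)
Lemma det_sub_Unext2_resolvent :
  a * (a + b * s) * \det ((a * s)%:M - Unext (Unext Y)) =
  a ^+ N * (((a + gamma) * (a + b * s) + a * (1 - a)) * \det (s%:M - Unext Y)
            - gamma * (1 + b * s) * \det M).
Proof.
rewrite det_sub_Unext2 det_sub_Unext /gamma resolvent_uE.
have -> : c = s * psi - a * chi by rewrite resolvent_aYE opprB addrC subrK.
by field.
Qed.

End Resolvent.

Lemma char_poly_Unext2 Y :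
  a%:P * (a%:P + b%:P * 'X) * (char_poly (Unext (Unext Y)) \Po (a *: 'X)) =
  (a ^+ N)%:P * (((a + gamma)%:P * (a%:P + b%:P * 'X) + (a * (1 - a))%:P)
                   * char_poly (Unext Y)
                 - gamma%:P * (1 + b%:P * 'X) * char_poly (a *: Y)).
Proof.
apply: (eq_poly_off_root (monic_neq0 (char_poly_monic (a *: Y)))) => x.
rewrite /root horner_char_poly -unitfE -unitmxE => M_unit.
rewrite !(hornerM, hornerD, hornerN, hornerC, hornerX, hornerZ, horner_comp) !horner_char_poly.
exact: det_sub_Unext2_resolvent.
Qed.

Lemma det_scalar_add_Unext Y :
  a * \det (a%:M + b *: Unext Y) = gamma * \det (a%:M + (a * b) *: Y).
Proof.
have -> : a%:M + b *: Unext Y = (1%:M + b *: Y) *m (a%:M + (b *: ones) *m w).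
  rewrite UnextE !scalerDr !mulmxDl !mulmxDr !mul1mx mul_mx_scalar -!scalemxAl -!scalemxAr.
  by rewrite !scalerDr !scalerA !mulmxA (mulrC b a) !addrA (addrAC a%:M).
have -> : a%:M + (a * b) *: Y = a *: (1%:M + b *: Y).
  by rewrite scalerDr scale_scalar_mx mulr1 scalerA.
rewrite det_mulmx mulrCA det_scalar_add_rank1 // detZ -scalemxAr mxE.
by rewrite /gamma -/c; ring.
Qed.

Section Nodes.
Hypothesis b_neq0 : b != 0.
Variables (Y : 'M[F]_N) (r0 r1 : 'I_N -> F).
Hypothesis charY : char_poly Y = \prod_j ('X - (r0 j)%:P).
Hypothesis charUnextY : char_poly (Unext Y) = \prod_j ('X - (r1 j)%:P).
Hypothesis r0_regular : forall j, 1 + b * r0 j != 0.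

Lemma horner_char_poly_scale x : (char_poly (a *: Y)).[x] = \prod_j (x - a * r0 j).
Proof.
rewrite horner_char_poly -scaleNr (det_scalar_add_scale _ charY) ?oppr_eq0 //.
by apply: eq_bigr => j _; rewrite mulNr.
Qed.

Lemma prod_Unext_shift :
  a * \prod_j (a + b * r1 j) = gamma * a ^+ N * \prod_j (1 + b * r0 j).
Proof.
rewrite -(det_scalar_add_scale _ charUnextY) // det_scalar_add_Unext.
rewrite (det_scalar_add_scale _ charY) ?mulf_neq0 // -mulrA; congr (_ * _).
rewrite -[X in a ^+ X]card_ord -prodrMl; apply: eq_bigr => j _; ring.
Qed.

Let G := \prod_j (1 + b * r0 j).
Let E := char_poly (Unext (Unext Y)).

Lemma horner_char_poly_Unext2 t :
  a * (a + b * t) * E.[a * t] =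
  a ^+ N * (((a + gamma) * (a + b * t) + a * (1 - a)) * \prod_j (t - r1 j)
            - gamma * (1 + b * t) * \prod_j (t - a * r0 j)).
Proof.
have := congr1 (horner^~ t) (char_poly_Unext2 Y).
rewrite !(hornerM, hornerD, hornerN, hornerC, hornerX, hornerZ, horner_comp) => ->.
by rewrite horner_char_poly_scale charUnextY horner_prod; under eq_bigr do rewrite hornerXsubC.
Qed.

Lemma char_poly_Unext2_node_regular k : a + b * r1 k != 0 ->
  E.[a * r1 k] * G =
  - (1 + b * r1 k) * \prod_j (r1 k - a * r0 j) * \prod_(j | j != k) (a + b * r1 j).
Proof.
move=> regular; have hE := horner_char_poly_Unext2 (r1 k).
rewrite [\prod_j (r1 k - r1 j)](bigD1 k) //= subrr mul0r mulr0 sub0r in hE.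
have hW : a * (a + b * r1 k) * \prod_(j | j != k) (a + b * r1 j) = gamma * a ^+ N * G.
  by rewrite -mulrA -prod_Unext_shift [in RHS](bigD1 k).
apply: (mulfI (mulf_neq0 a_neq0 regular)); rewrite mulrA hE.
transitivity (- (1 + b * r1 k) * \prod_j (r1 k - a * r0 j) *
              (a * (a + b * r1 k) * \prod_(j | j != k) (a + b * r1 j))); last by ring.
by rewrite hW; ring.
Qed.

Section SingularNode.
Variable k : 'I_N.
Hypothesis singular : a + b * r1 k = 0.

Lemma gamma_singular : gamma = 0.
Proof.
have G_neq0 : G != 0 by apply/prodf_neq0 => j _.
have := prod_Unext_shift; rewrite (bigD1 k) //= singular mul0r mulr0 => /esym/eqP.
by rewrite !mulf_eq0 expf_eq0 (negbTE a_neq0) (negbTE G_neq0) andbF !orbF => /eqP.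
Qed.

(* Here [horner_char_poly_Unext2] degenerates to [0 = 0] at [r1 k]; instead the common
   factor ['X - r1 k] of [a + b 'X] and [char_poly (Unext Y)] is cancelled polynomially. *)
Lemma horner_char_poly_Unext2_singular :
  a * b * E.[a * r1 k] = a ^+ N * a * (1 + b * r1 k) * \prod_(j | j != k) (r1 k - r1 j).
Proof.
set Q := \prod_(j | j != k) ('X - (r1 j)%:P).
have lin : a%:P + b%:P * 'X = b%:P * ('X - (r1 k)%:P).
  have br : b * r1 k = - a by apply/eqP; rewrite -addr_eq0 addrC singular.
  by rewrite mulrBr -polyCM br polyCN opprK addrC.
have hP : ('X - (r1 k)%:P) * (a%:P * b%:P * (E \Po (a *: 'X))) =
          ('X - (r1 k)%:P) * ((a ^+ N)%:P * a%:P * (1 + b%:P * 'X) * Q).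
  have := char_poly_Unext2 Y; rewrite gamma_singular addr0 !mul0r subr0.
  rewrite charUnextY (bigD1 k) //= -/Q {1}lin polyCM polyCB polyC1 => hE.
  transitivity (a%:P * (b%:P * ('X - (r1 k)%:P)) * (E \Po (a *: 'X))); first by ring.
  by rewrite hE; ring.
move/(mulfI (monic_neq0 (monicXsubC (r1 k)))): hP => /(congr1 (horner^~ (r1 k))).
rewrite !(hornerM, hornerD, hornerC, hornerX, hornerZ, horner_comp) horner_prod => ->.
by under eq_bigr do rewrite hornerXsubC.
Qed.

Lemma prod_node_singular :
  b * \prod_j (r1 k - a * r0 j) * \prod_(j | j != k) (a + b * r1 j) =
  - (a ^+ N * G * \prod_(j | j != k) (r1 k - r1 j)).
Proof.
have pk : b * (r1 k - a * r0 k) = - (a * (1 + b * r0 k)).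
  transitivity (- (a * (1 + b * r0 k)) + (a + b * r1 k)); first by ring.
  by rewrite singular addr0.
have pt j : (r1 k - a * r0 j) * (a + b * r1 j) = a * ((1 + b * r0 j) * (r1 k - r1 j)).
  transitivity (a * ((1 + b * r0 j) * (r1 k - r1 j)) + (a + b * r1 k) * (r1 j - a * r0 j)).
    by ring.
  by rewrite singular mul0r addr0.
rewrite (bigD1 k) //= mulrA pk -mulrA -big_split /=.
under eq_bigr => j _ do rewrite pt.
rewrite prodrMl big_split /= cardC1 card_ord /G [in RHS](bigD1 k) //= exprS.
ring.
Qed.

Lemma char_poly_Unext2_node_singular :
  E.[a * r1 k] * G =
  - (1 + b * r1 k) * \prod_j (r1 k - a * r0 j) * \prod_(j | j != k) (a + b * r1 j).
Proof.
apply: (mulfI (mulf_neq0 a_neq0 b_neq0)).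
transitivity (a * b * E.[a * r1 k] * G); first by ring.
transitivity (- a * (1 + b * r1 k) *
  (b * \prod_j (r1 k - a * r0 j) * \prod_(j | j != k) (a + b * r1 j))); last by ring.
by rewrite horner_char_poly_Unext2_singular prod_node_singular; ring.
Qed.

End SingularNode.

Lemma char_poly_Unext2_node k :
  E.[a * r1 k] * G =
  - (1 + b * r1 k) * \prod_j (r1 k - a * r0 j) * \prod_(j | j != k) (a + b * r1 j).
Proof.
have [singular|regular] := eqVneq (a + b * r1 k) 0.
  exact: char_poly_Unext2_node_singular.
exact: char_poly_Unext2_node_regular.
Qed.

End Nodes.

End RankOneDynamics.

Section Proposition.
Variables (R : realType) (n : nat) (a b : R[i]) (z : nat -> 'I_n.+1 -> R[i]).
Local Notation N := n.+1.
Hypothesis a_neq0 : a != 0.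
Hypothesis b_neq0 : b != 0.
Hypothesis z_inj : forall l, injective (z l).
Hypothesis z_regular : forall l k, 1 + b * z l k != 0.
Hypothesis B_unit : ((a - 1)%:M + b *: V0 a b z) \in unitmx.
Hypothesis step_roots : forall l, step_poly a b z l = \prod_k ('X - (z l.+2 k)%:P).

Let w : 'rV[R[i]]_N := \row_m (v0 a b z m / (1 + b * z 0%N m)).

Lemma V0E : V0 a b z = const_mx 1 *m w.
Proof. by apply/matrixP => i j; rewrite !mxE big_ord1 !mxE mul1r. Qed.

Lemma Umat_succ l : Umat a b z l.+1 = Unext a b w (Umat a b z l).
Proof.
rewrite /Umat /Unext -V0E.
set A := a%:M + b *: V0 a b z; set B := (a - 1)%:M + b *: V0 a b z.
have AB : A = B + 1 by rewrite /A /B raddfB /= addrAC subrK.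
rewrite exprSr !mulmxE mulrDl !mulrA -addrA; congr (_ + _).
have -> : A ^+ l * A - 1 = (A ^+ l - 1) * A + B.
  by rewrite mulrBl mul1r -addrA; congr (_ + _); rewrite AB opprD addrAC addNr add0r.
rewrite mulrDr mulrA -(mulrA _ (invmx B) B) -mulmxE mulVmx // mulmxE mulr1.
by congr (_ + _).
Qed.

Lemma Umat0 : Umat a b z 0 = U0 z.
Proof. by rewrite /Umat !expr0 subrr mulmx0 addr0 mulmx1. Qed.

Lemma char_poly_Umat0 : char_poly (Umat a b z 0) = \prod_j ('X - (z 0%N j)%:P).
Proof.
rewrite Umat0 char_poly_trig ?diag_mx_is_trig //.
by apply: eq_bigr => j _; rewrite !mxE eqxx mulr1n.
Qed.

Lemma char_poly_Umat1 : char_poly (Umat a b z 1) = \prod_j ('X - (z 1%N j)%:P).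
Proof.
have U1 : Umat a b z 1 = diag_mx (\row_j (a * z 0%N j)) + (\col_i (1 + b * z 0%N i)) *m w.
  rewrite Umat_succ Umat0 UnextE; congr (_ + _ *m w); apply/matrixP => i j.
    by rewrite !mxE mulrnAr.
  by rewrite /U0 mul_diag_mx !mxE mulr1.
have az_inj : injective (fun k => a * z 0%N k) by move=> i j /(mulfI a_neq0) /z_inj.
apply: (char_poly_interp az_inj) => k.
rewrite U1 char_poly_diag_add_rank1 secular_poly_node !mxE divfK // /v0.
have D_neq0 : \prod_(j | j != k) (a * (z 0%N j - z 0%N k)) != 0.
  apply/prodf_neq0 => j jk; rewrite mulf_neq0 // subr_eq0.
  by apply: contra jk => /eqP/z_inj ->.
have -> : \prod_(j | j != k) (a * z 0%N k - a * z 0%N j) =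
          (-1) ^+ n * \prod_(j | j != k) (a * (z 0%N j - z 0%N k)).
  rewrite (eq_bigr (fun j => - (a * (z 0%N j - z 0%N k)))) => [|j _]; last by ring.
  by rewrite prodrN cardC1 card_ord.
have -> : \prod_j (a * z 0%N k - z 1%N j) = (-1) ^+ N * \prod_j (z 1%N j - a * z 0%N k).
  rewrite (eq_bigr (fun j => - (z 1%N j - a * z 0%N k))) => [|j _]; last by ring.
  by rewrite prodrN card_ord.
by rewrite exprS; field.
Qed.

Lemma step_poly_node l k :
  (step_poly a b z l).[a * z l.+1 k] * \prod_j (1 + b * z l j) =
  - (1 + b * z l.+1 k) * \prod_j (z l.+1 k - a * z l j) *
    \prod_(j | j != k) (a + b * z l.+1 j).
Proof.
have -> : step_poly a b z l = secular_poly (fun j => a * z l.+1 j) (step_coef a b z l) by [].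
rewrite secular_poly_node /step_coef.
have factors : \prod_(j | j != k)
     ((z l.+1 k - a * z l j) / (z l.+1 k - z l.+1 j) * ((1 + b * z l.+1 j / a) / (1 + b * z l j)))
   * \prod_(j | j != k) (a * z l.+1 k - a * z l.+1 j) * \prod_(j | j != k) (1 + b * z l j)
   = \prod_(j | j != k) (z l.+1 k - a * z l j) * \prod_(j | j != k) (a + b * z l.+1 j).
  rewrite -!big_split; apply: eq_bigr => j jk /=.
  have zt_neq : z l.+1 k - z l.+1 j != 0.
    by rewrite subr_eq0; apply: contra jk => /eqP/z_inj ->.
  by field; rewrite a_neq0 zt_neq z_regular.
rewrite [\prod_j (1 + _)](bigD1 k) //= [\prod_j (_ - _)](bigD1 k) //=; move: factors.
move: (\prod_(j | j != k) (_ / _ * _)) (\prod_(j | j != k) (a * _ - _)) => PF P2.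
move: (\prod_(j | j != k) (a + _)) (\prod_(j | j != k) (1 + _)) => PW PD.
move: (\prod_(j | j != k) (_ - _)) => PA factors.
transitivity (- ((z l.+1 k - a * z l k) * ((1 + b * z l.+1 k) / (1 + b * z l k))
                * (1 + b * z l k)) * (PF * P2 * PD)); first by ring.
by rewrite factors; field; rewrite z_regular.
Qed.

Lemma char_poly_Umat_succ2 l :
  char_poly (Umat a b z l) = \prod_j ('X - (z l j)%:P) ->
  char_poly (Umat a b z l.+1) = \prod_j ('X - (z l.+1 j)%:P) ->
  char_poly (Umat a b z l.+2) = \prod_j ('X - (z l.+2 j)%:P).
Proof.
move=> charU; rewrite [Umat _ _ _ l.+1]Umat_succ => charU1.
rewrite [Umat _ _ _ l.+2]Umat_succ [Umat _ _ _ l.+1]Umat_succ.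
have azt_inj : injective (fun k => a * z l.+1 k) by move=> i j /(mulfI a_neq0) /z_inj.
apply: (char_poly_interp azt_inj) => k.
have G_neq0 : \prod_j (1 + b * z l j) != 0 by apply/prodf_neq0 => j _.
apply: (mulIf G_neq0).
rewrite (char_poly_Unext2_node a_neq0 b_neq0 charU charU1 (z_regular l)) -step_poly_node.
by rewrite step_roots horner_prod; under eq_bigr do rewrite hornerXsubC.
Qed.

End Proposition.

Theorem proposition2p2p1 (R : realType) (n : nat) (a b : R[i])
  (z : nat -> 'I_n.+1 -> R[i]) :
  a != 0 -> b != 0 ->
  (forall l, injective (z l)) ->
  (forall l k, 1 + b * z l k != 0) ->
  (forall l k j, z l.+2 j - a * z l.+1 k != 0) ->
  ((a - 1)%:M + b *: V0 a b z) \in unitmx ->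
  (forall l, step_poly a b z l = \prod_(k < n.+1) ('X - (z l.+2 k)%:P)) ->
  forall l, char_poly (Umat a b z l) = \prod_(k < n.+1) ('X - (z l k)%:P).
Proof.
(* The nonvanishing of [z l.+2 j - a * z l.+1 k] only matters for the uncleared equation. *)
move=> a_neq0 b_neq0 z_inj z_regular _ B_unit step_roots.
have charU l : char_poly (Umat a b z l) = \prod_k ('X - (z l k)%:P) /\
               char_poly (Umat a b z l.+1) = \prod_k ('X - (z l.+1 k)%:P).
  elim: l => [|l [charU charU1]].
    by split; [exact: char_poly_Umat0 | exact: char_poly_Umat1].
  by split; last exact: char_poly_Umat_succ2.
by move=> l; case: (charU l).
Qed.
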